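(* Let $f(x)=\frac1n\sum_{i=1}^nf_i(x)$ on $\mathbb{R}^d$, where each $f_i$ is convex, $L_i$-smooth and non-negative, and let $x^*$ be a minimizer of $f$. Consider SGD with the SPS$^\ell_{\max}$ stepsize (defined in the context) using $\ell^*_{\mathcal S}=0$ for all $\mathcal S\subseteq[n]$, and let $\alpha:=\min\{\frac1{2cL_{\max}},\gamma_b\}$ with $L_{\max}=\max_iL_i$. (i) If $c=1$, then for every $K\ge1$, $\mathbb{E}[f(\bar x^K)-f(x^* )]\le\frac{\|x^0-x^*\|^2}{\alpha K}+\frac{2\gamma_bf(x^* )}{\alpha}$, where $\bar x^K=\frac1K\sum_{k=0}^{K-1}x^k$. (ii) If in addition $f$ is $\mu$-strongly convex and $c\ge1/2$, then for every $k\ge0$, $\mathbb{E}\|x^k-x^*\|^2\le(1-\mu\alpha)^k\|x^0-x^*\|^2+\frac{2\gamma_bf(x^* )}{\mu\alpha}$.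
   Context: Minibatches: fix a batch size $B$; at each iteration a subset $\mathcal S_k\subseteq[n]$, $|\mathcal S_k|=B$, is sampled uniformly at random, independently across iterations. For $\mathcal S\subseteq[n]$, $f_{\mathcal S}:=\frac1{|\mathcal S|}\sum_{i\in\mathcal S}f_i$. SGD: $x^{k+1}=x^k-\gamma_k\nabla f_{\mathcal S_k}(x^k)$ from given $x^0$. SPS$^\ell_{\max}$ stepsize with $\ell^*=0$: $\gamma_k=\min\left\{\frac{f_{\mathcal S_k}(x^k)}{c\|\nabla f_{\mathcal S_k}(x^k)\|^2},\ \gamma_b\right\}$ with constants $c,\gamma_b>0$; if $\nabla f_{\mathcal S_k}(x^k)=0$ the iterate is not updated. *)

From HB Require Import structures.
From mathcomp Require Import all_boot all_order all_algebra.
From mathcomp Require Import all_classical all_reals all_analysis.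
Set Implicit Arguments. Unset Strict Implicit. Unset Printing Implicit Defensive.
Import Order.TTheory GRing.Theory Num.Theory.
Import numFieldNormedType.Exports.
Local Open Scope ring_scope.

Section SPS.
Variables (R : realType) (d n : nat).

Notation vec := 'rV[R]_d.

Definition dotv (u v : vec) : R := \sum_(j < d) u 0 j * v 0 j.
Definition sqnorm (u : vec) : R := dotv u u.
Definition enorm (u : vec) : R := Num.sqrt (sqnorm u).

(* Gradient: the row vector of partial derivatives (Frechet
   differentiability is assumed separately). *)
Definition grad (f : vec -> R) (x : vec) : vec :=
  \row_(j < d) ('D_(delta_mx 0 j : vec) f x).

Definition convex_fun (f : vec -> R) : Prop :=
  forall (x y : vec) (t : R), 0 <= t <= 1 ->
    f ((1 - t) *: x + t *: y) <= (1 - t) * f x + t * f y.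

Definition strongly_convex (mu : R) (f : vec -> R) : Prop :=
  forall (x y : vec) (t : R), 0 <= t <= 1 ->
    f ((1 - t) *: x + t *: y) <=
      (1 - t) * f x + t * f y - mu / 2 * t * (1 - t) * sqnorm (x - y).

Definition smooth (L : R) (f : vec -> R) : Prop :=
  (forall x, differentiable f x) /\
  forall x y, enorm (grad f x - grad f y) <= L * enorm (x - y).

Variable fs : 'I_n -> vec -> R.

Definition favg (x : vec) : R := n%:R^-1 * \sum_(i < n) fs i x.

Definition fS (S : {set 'I_n}) (x : vec) : R :=
  (#|S|%:R)^-1 * \sum_(i in S) fs i x.
Definition gradS (S : {set 'I_n}) (x : vec) : vec :=
  (#|S|%:R)^-1 *: \sum_(i in S) grad (fs i) x.

Variables (c gb : R).

Definition sps_step (S : {set 'I_n}) (x : vec) : R :=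
  Num.min (fS S x / (c * sqnorm (gradS S x))) gb.

Definition sgd_step (x : vec) (S : {set 'I_n}) : vec :=
  if gradS S x == 0 then x else x - sps_step S x *: gradS S x.

Definition sgd_iter (x0 : vec) (s : seq {set 'I_n}) : vec :=
  foldl sgd_step x0 s.

Variable B : nat.

(* Expectation over K i.i.d. minibatches, each uniform among the B-subsets
   of [n]: uniform average over all K-tuples of B-subsets. *)
Definition batches_ok K (t : K.-tuple {set 'I_n}) : bool :=
  all (fun S : {set 'I_n} => #|S| == B) (tval t).

Definition Exp K (g : K.-tuple {set 'I_n} -> R) : R :=
  (\sum_(t : K.-tuple {set 'I_n} | batches_ok t) g t) /
  (#|[set t : K.-tuple {set 'I_n} | batches_ok t]|%:R).

Definition xbar (x0 : vec) K (t : K.-tuple {set 'I_n}) : vec :=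
  K%:R^-1 *: \sum_(k < K) sgd_iter x0 (take k (tval t)).

End SPS.

Definition Lmax (R : realType) (n : nat) (L : 'I_n -> R) : R :=
  \big[Num.max/0]_(i < n) L i.

From HB Require Import structures.
From mathcomp Require Import all_boot all_order all_algebra.
From mathcomp Require Import all_classical all_reals all_analysis.
From mathcomp Require Import perm ring lra.
Import Order.TTheory GRing.Theory Num.Theory.
Import numFieldNormedType.Exports.
Local Open Scope ring_scope.

Set Implicit Arguments. Unset Strict Implicit. Unset Printing Implicit Defensive.

(* With l* = 0 the Polyak stepsize satisfies gamma c |g_S|^2 <= f_S(x), while
   smoothness and non-negativity give |g_S|^2 <= 2 L f_S(x); hence
   alpha <= gamma <= gamma_b.  Expanding |x - gamma g_S - x*|^2 with these
   bounds yields, for c >= 1/2,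
     |x' - x*|^2 <= |x - x*|^2 - 2 alpha D_S - alpha (2 - 1/c) f_S(x)
                    + 2 gamma_b f_S x*,
   where D_S >= 0 is the Bregman gap of f_S between x and x*.  Over a uniform
   B-subset S, f_S and its gradient are unbiased (each index lies in the same
   number of B-subsets), so in expectation f_S becomes f.  For c = 1 this
   telescopes into a bound on alpha sum_k [f(x^k) - f x*], and Jensen gives
   (i).  Under mu-strong convexity D >= mu/2 |x - x*|^2, a contraction by
   1 - mu alpha, which is non-negative because mu <= L_max. *)

Section Euclidean.
Variables (R : realType) (d : nat).
Implicit Types (u v w : 'rV[R]_d) (s : R).

Lemma dotvC u v : dotv u v = dotv v u.
Proof. by apply: eq_bigr => j _; rewrite mulrC. Qed.

Lemma dotvDl u v w : dotv (u + v) w = dotv u w + dotv v w.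
Proof. by rewrite /dotv -big_split; apply: eq_bigr => j _; rewrite mxE mulrDl. Qed.

Lemma dotvZl s u v : dotv (s *: u) v = s * dotv u v.
Proof. by rewrite /dotv mulr_sumr; apply: eq_bigr => j _; rewrite mxE mulrA. Qed.

Lemma dotvNl u v : dotv (- u) v = - dotv u v.
Proof. by rewrite -scaleN1r dotvZl mulN1r. Qed.

Lemma dotvBl u v w : dotv (u - v) w = dotv u w - dotv v w.
Proof. by rewrite dotvDl dotvNl. Qed.

Lemma dotvZr s u v : dotv u (s *: v) = s * dotv u v.
Proof. by rewrite dotvC dotvZl dotvC. Qed.

Lemma dotvBr u v w : dotv u (v - w) = dotv u v - dotv u w.
Proof. by rewrite dotvC dotvBl !(dotvC u). Qed.

Lemma dotv0l v : dotv 0 v = 0.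
Proof. by rewrite /dotv big1 // => j _; rewrite mxE mul0r. Qed.

Lemma dotv_suml (I : finType) (P : pred I) (F : I -> 'rV[R]_d) v :
  dotv (\sum_(i | P i) F i) v = \sum_(i | P i) dotv (F i) v.
Proof.
elim/big_rec2: _ => [|i y1 y2 _ <-]; first exact: dotv0l.
by rewrite dotvDl.
Qed.

Lemma dotv_sumr (I : finType) (P : pred I) (F : I -> 'rV[R]_d) u :
  dotv u (\sum_(i | P i) F i) = \sum_(i | P i) dotv u (F i).
Proof. by rewrite dotvC dotv_suml; apply: eq_bigr => i _; rewrite dotvC. Qed.

Lemma sqnorm_ge0 u : 0 <= sqnorm u.
Proof. by apply: sumr_ge0 => j _; rewrite -expr2 sqr_ge0. Qed.

Lemma sqnorm_eq0 u : (sqnorm u == 0) = (u == 0).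
Proof.
apply/idP/eqP => [|->]; last by rewrite /sqnorm dotv0l.
rewrite /sqnorm /dotv psumr_eq0 => [/allP u0|j _]; last by rewrite -expr2 sqr_ge0.
apply/rowP => j; rewrite mxE; have /implyP := u0 j (mem_index_enum _).
by rewrite mulf_eq0 orbb => /(_ isT) /eqP.
Qed.

Lemma sqnormB u v : sqnorm (u - v) = sqnorm u - 2 * dotv u v + sqnorm v.
Proof. by rewrite /sqnorm !dotvBl !dotvBr (dotvC v u); ring. Qed.

Lemma sqnormZ s u : sqnorm (s *: u) = s ^+ 2 * sqnorm u.
Proof. by rewrite /sqnorm dotvZl dotvZr mulrA expr2. Qed.

Lemma sqnormN u : sqnorm (- u) = sqnorm u.
Proof. by rewrite -scaleN1r sqnormZ sqrrN expr1n mul1r. Qed.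

Lemma sqnormBC u v : sqnorm (u - v) = sqnorm (v - u).
Proof. by rewrite -sqnormN opprB. Qed.

Lemma enorm_ge0 u : 0 <= enorm u.
Proof. exact: sqrtr_ge0. Qed.

Lemma sqr_enorm u : enorm u ^+ 2 = sqnorm u.
Proof. by rewrite sqr_sqrtr // sqnorm_ge0. Qed.

(* From 0 <= |a u - b v|^2 = a (a |u|^2 |v|^2 - b^2) with a = |v|^2, b = <u, v>. *)
Lemma dotv_sqr_le u v : dotv u v ^+ 2 <= sqnorm u * sqnorm v.
Proof.
have [v0 | v_neq0] := eqVneq v 0; first by rewrite v0 dotvC /sqnorm !dotv0l expr0n mulr0.
have v_gt0 : 0 < sqnorm v by rewrite lt_def sqnorm_eq0 v_neq0 sqnorm_ge0.
have := sqnorm_ge0 (sqnorm v *: u - dotv u v *: v).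
rewrite sqnormB !sqnormZ dotvZl dotvZr => ge0.
rewrite -subr_ge0 -(pmulr_rge0 _ v_gt0); nra.
Qed.

End Euclidean.

Section Calculus.
Variables (R : realType) (d : nat).
Notation vec := 'rV[R]_d.
Implicit Types (f : vec -> R) (x y z v : vec).

Lemma derive_grad f x v : differentiable f x -> 'D_v f x = dotv (grad f x) v.
Proof.
move=> df; rewrite deriveE // {1}[v]row_sum_delta linear_sum /dotv.
by apply: eq_bigr => j _; rewrite linearZ /= mxE -deriveE // mulrC.
Qed.

Lemma is_derive_line f x v t : differentiable f (x + t *: v) ->
  is_derive t 1 (fun s : R => f (x + s *: v)) (dotv (grad f (x + t *: v)) v).
Proof.
move=> df; rewrite -derive_grad //.
have shiftE : (fun h : R => h^-1 *: (((fun s : R => f (x + s *: v)) \o shift t) (h *: 1)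
                                     - f (x + t *: v)))
  = (fun h : R => h^-1 *: ((f \o shift (x + t *: v)) (h *: v) - f (x + t *: v))).
  apply/funext => h /=; congr (_ *: (f _ - _)).
  by rewrite /shift /= [h *: 1]mulr1 scalerDl addrCA addrA.
apply: DeriveDef; first by rewrite /derivable shiftE; exact: diff_derivable.
by rewrite /derive shiftE.
Qed.

(* Mean value theorem for [s |-> f (x + s v) - s^2 b] on [0, 1]. *)
Lemma line_mvt f x v (b : R) : (forall y, differentiable f y) ->
  exists2 s, 0 < s < 1 &
    f (x + v) - f x - b = dotv (grad f (x + s *: v)) v - 2 * s * b.
Proof.
move=> df; pose h := (fun s : R => f (x + s *: v)) - (@id R) ^+ 2 * cst b.
have dh s : is_derive s (1 : R) h (dotv (grad f (x + s *: v)) v - 2 * s * b).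
  have dq : is_derive s (1 : R) ((@id R) ^+ 2 * cst b) (2 * s * b).
    by apply: is_derive_eq; rewrite /cst /= scaler0 add0r expr1 /GRing.scale /=; ring.
  have dl := is_derive_line (df (x + s *: v)).
  exact: is_deriveB.
have h_cont : {in `[0, 1], forall s, derivable h s 1} by move=> s _; exact: ex_derive.
have [s /andP[s_gt0 s_lt1]] :=
  MVT ltr01 (fun s _ => dh s) (derivable_within_continuous h_cont).
rewrite /h !fctE /cst scale1r scale0r addr0 expr1n expr0n /= mul1r mul0r !subr0 mulr1.
by move=> E; exists s; [apply/andP | lra].
Qed.

Lemma smooth_le f L L' : L <= L' -> smooth L f -> smooth L' f.
Proof.
move=> LL' [df lip]; split=> // x y; apply: le_trans (lip x y) _.
by apply: ler_wpM2r; first exact: enorm_ge0.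
Qed.

Lemma smooth_dotv_le f L y z : 0 <= L -> smooth L f ->
  `|dotv (grad f y - grad f z) (y - z)| <= L * sqnorm (y - z).
Proof.
move=> L_ge0 [_ lip]; set u := grad f y - grad f z; set w := y - z.
have uw : sqnorm u <= L ^+ 2 * sqnorm w.
  rewrite -!sqr_enorm -exprMn ler_sqr ?nnegrE ?mulr_ge0 ?enorm_ge0 //; exact: lip.
have Lw_ge0 : 0 <= L * sqnorm w by rewrite mulr_ge0 ?sqnorm_ge0.
rewrite -ler_sqr ?nnegrE // real_normK ?num_real //.
apply: le_trans (dotv_sqr_le u w) _; rewrite exprMn expr2 mulrA.
by apply: ler_wpM2r; rewrite ?sqnorm_ge0 // -expr2.
Qed.

Lemma smooth_quadratic_bound f L x v : 0 <= L -> smooth L f ->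
  `|f (x + v) - f x - dotv (grad f x) v| <= L / 2 * sqnorm v.
Proof.
move=> L_ge0 sm; have [df _] := sm.
have grad_dev s : 0 < s ->
    `|dotv (grad f (x + s *: v) - grad f x) v| <= L * s * sqnorm v.
  move=> s_gt0; have := smooth_dotv_le (x + s *: v) x L_ge0 sm.
  rewrite addrAC subrr add0r dotvZr sqnormZ normrM gtr0_norm // => le.
  by rewrite -(ler_pM2l s_gt0); apply: le_trans le _; rewrite expr2; lra.
rewrite ler_norml; apply/andP; split.
- have [s /andP[s_gt0 _]] := line_mvt x v (- (L / 2 * sqnorm v)) df.
  have := grad_dev s s_gt0; rewrite ler_norml dotvBl => /andP[le _] E; lra.
- have [s /andP[s_gt0 _]] := line_mvt x v (L / 2 * sqnorm v) df.
  have := grad_dev s s_gt0; rewrite ler_norml dotvBl => /andP[_ le] E; lra.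
Qed.

End Calculus.

Section FirstOrder.
Variables (R : realType) (d : nat).
Notation vec := 'rV[R]_d.
Implicit Types (f : vec -> R) (g x y v : vec).

Lemma convex_strongly_convex0 f : convex_fun f -> strongly_convex 0 f.
Proof. by move=> cvx x y t t01; rewrite mul0r !mul0r subr0; exact: cvx. Qed.

Lemma line_convexE x y t : (1 - t) *: x + t *: y = x + t *: (y - x).
Proof. by rewrite scalerBl scalerBr scale1r addrAC -addrA. Qed.

(* Divide the chord inequality at [t] by [t] and let [t] tend to [0]. *)
Lemma strongly_convex_first_order f g mu (Q : R) x y : strongly_convex mu f ->
  (forall t, 0 < t <= 1 ->
     f x + t * dotv g (y - x) - t ^+ 2 * Q <= f (x + t *: (y - x))) ->
  f x + dotv g (y - x) + mu / 2 * sqnorm (y - x) <= f y.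
Proof.
move=> sc lower; set v := y - x; set m := mu / 2 * sqnorm v.
suff le t : 0 < t <= 1 -> f x + dotv g v + m <= f y + t * (m + Q).
  apply/ler_addgt0Pr => e e_gt0.
  have [mQ_le0 | mQ_gt0] := lerP (m + Q) 0.
    by apply: le_trans (le 1 _) _; rewrite ?ler01 ?andbT //; nra.
  pose t := Num.min 1 (e / (m + Q)).
  have t_gt0 : 0 < t by rewrite lt_min ltr01 divr_gt0.
  have t_le1 : t <= 1 by rewrite ge_min lexx.
  apply: le_trans (le t _) _; first by rewrite t_gt0 t_le1.
  by rewrite lerD2l -ler_pdivlMr // /t ge_min lexx orbT.
case/andP=> t_gt0 t_le1; have := sc x y t; rewrite ltW //= t_le1 line_convexE.
rewrite sqnormBC -/v => /(_ isT).
have -> : mu / 2 * t * (1 - t) * sqnorm v = t * (1 - t) * m by rewrite /m; ring.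
move=> chord; have := lower t; rewrite t_gt0 t_le1 => /(_ isT) low.
have : t * (dotv g v + m) <= t * (f y - f x + t * (m + Q)) by lra.
by rewrite ler_pM2l //; lra.
Qed.

Lemma smooth_convex_first_order f L x y : 0 <= L -> smooth L f -> convex_fun f ->
  f x + dotv (grad f x) (y - x) <= f y.
Proof.
move=> L_ge0 sm /convex_strongly_convex0 cvx.
have := strongly_convex_first_order (g := grad f x) (Q := L / 2 * sqnorm (y - x))
  (x := x) (y := y) cvx.
rewrite mul0r mul0r addr0; apply=> t /andP[t_gt0 _].
have := smooth_quadratic_bound x (t *: (y - x)) L_ge0 sm.
by rewrite ler_norml dotvZr sqnormZ => /andP[le _]; lra.
Qed.

Lemma sqnorm_grad_le f g x (L : R) : 0 < L ->
  (forall v, f (x + v) <= f x + dotv g v + L / 2 * sqnorm v) ->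
  0 <= f (x - L^-1 *: g) -> sqnorm g <= 2 * L * f x.
Proof.
move=> L_gt0 upper f_ge0; have := upper (- (L^-1 *: g)).
rewrite sqnormN sqnormZ dotvC dotvNl dotvZl -/(sqnorm g).
have -> : L / 2 * (L^-1 ^+ 2 * sqnorm g) = L^-1 * sqnorm g / 2.
  by field; rewrite gt_eqF.
move=> le; have : L^-1 * sqnorm g <= 2 * f x by lra.
by rewrite ler_pdivrMl // mulrCA mulrA.
Qed.

Lemma jensen_first_order f g K (p : 'I_K -> vec) : (0 < K)%N ->
  let xm := K%:R^-1 *: \sum_(k < K) p k in
  (forall y, f xm + dotv g (y - xm) <= f y) ->
  f xm <= K%:R^-1 * \sum_(k < K) f (p k).
Proof.
move=> K_gt0 xm first_order; have K_neq0 : K%:R != 0 :> R by rewrite pnatr_eq0 -lt0n.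
have := @ler_sum _ _ (index_enum 'I_K) xpredT _ _ (fun k _ => first_order (p k)).
rewrite big_split /= -dotv_sumr sumrB !sumr_const card_ord.
have -> : \sum_(k < K) p k - xm *+ K = 0.
  by rewrite /xm -scaler_nat scalerA mulfV // scale1r subrr.
rewrite dotvC dotv0l addr0 => le.
by rewrite -[leLHS](mulKf K_neq0) ler_wpM2l ?invr_ge0 ?ler0n // mulr_natl.
Qed.

End FirstOrder.

Section Mean.
Variables (R : realType) (I : finType).
Implicit Types (S : {set I}) (a b : I -> R).

Definition mean S a : R := #|S|%:R^-1 * \sum_(i in S) a i.

Lemma meanD S a b : mean S (fun i => a i + b i) = mean S a + mean S b.
Proof. by rewrite /mean big_split mulrDr. Qed.

Lemma meanB S a b : mean S (fun i => a i - b i) = mean S a - mean S b.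
Proof. by rewrite /mean sumrB mulrBr. Qed.

Lemma mean_cst S (k : R) : (0 < #|S|)%N -> mean S (fun=> k) = k.
Proof.
by move=> S_gt0; rewrite /mean sumr_const -[k *+ _]mulr_natl mulKf // pnatr_eq0 -lt0n.
Qed.

Lemma ler_mean S a b : (forall i, i \in S -> a i <= b i) -> mean S a <= mean S b.
Proof. by move=> le; rewrite ler_wpM2l ?invr_ge0 ?ler0n // ler_sum. Qed.

Lemma norm_mean_le S a (M : R) : (0 < #|S|)%N ->
  (forall i, i \in S -> `|a i| <= M) -> `|mean S a| <= M.
Proof.
move=> S_gt0 le; rewrite ler_norml -[in X in X <= _ <= _](mean_cst (- M) S_gt0).
rewrite -[in X in _ <= _ <= X](mean_cst M S_gt0).
by apply/andP; split; apply: ler_mean => i /le; rewrite ler_norml => /andP[].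
Qed.

Lemma mean_setT a : mean [set: I] a = #|I|%:R^-1 * \sum_i a i.
Proof. by rewrite /mean cardsT; congr (_ * _); apply: eq_bigl => i; rewrite inE. Qed.

End Mean.

Section Minibatch.
Variables (R : realType) (d n : nat) (fs : 'I_n -> 'rV[R]_d -> R) (Lm : R).
Notation vec := 'rV[R]_d.
Implicit Types (S : {set 'I_n}) (x y v : vec).

Hypothesis Lm_ge0 : 0 <= Lm.
Hypothesis fs_smooth : forall i, smooth Lm (fs i).
Hypothesis fs_convex : forall i, convex_fun (fs i).
Hypothesis fs_ge0 : forall i x, 0 <= fs i x.

Lemma fS_mean S x : fS fs S x = mean S (fs ^~ x).
Proof. by []. Qed.

Lemma dotv_gradS S x v : dotv (gradS fs S x) v = mean S (fun i => dotv (grad (fs i) x) v).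
Proof. by rewrite dotvZl dotv_suml. Qed.

Lemma favg_fS : favg fs = fS fs [set: 'I_n].
Proof. by apply/funext => x; rewrite fS_mean mean_setT card_ord. Qed.

Lemma fS_ge0 S x : 0 <= fS fs S x.
Proof. by rewrite mulr_ge0 ?invr_ge0 ?ler0n ?sumr_ge0. Qed.

Lemma favg_ge0 x : 0 <= favg fs x.
Proof. by rewrite favg_fS fS_ge0. Qed.

Lemma fS_quadratic_bound S x v : (0 < #|S|)%N ->
  `|fS fs S (x + v) - fS fs S x - dotv (gradS fs S x) v| <= Lm / 2 * sqnorm v.
Proof.
move=> S_gt0; rewrite !fS_mean dotv_gradS -!meanB.
by apply: norm_mean_le => // i _; exact: smooth_quadratic_bound.
Qed.

Lemma fS_first_order S x y : fS fs S x + dotv (gradS fs S x) (y - x) <= fS fs S y.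
Proof.
rewrite !fS_mean dotv_gradS -meanD; apply: ler_mean => i _.
exact: smooth_convex_first_order Lm_ge0 (fs_smooth i) (fs_convex i).
Qed.

Lemma sqnorm_gradS_le S x : 0 < Lm -> (0 < #|S|)%N ->
  sqnorm (gradS fs S x) <= 2 * Lm * fS fs S x.
Proof.
move=> Lm_gt0 S_gt0; apply: sqnorm_grad_le => [//| v |]; last exact: fS_ge0.
by have := fS_quadratic_bound x v S_gt0; rewrite ler_norml => /andP[_]; lra.
Qed.

Hypothesis n_gt0 : (0 < n)%N.

Let card_setT_gt0 : (0 < #|[set: 'I_n]|)%N.
Proof. by rewrite cardsT card_ord. Qed.

Lemma favg_strongly_convex_first_order mu x y : strongly_convex mu (favg fs) ->
  favg fs x + dotv (gradS fs [set: 'I_n] x) (y - x) + mu / 2 * sqnorm (y - x)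
    <= favg fs y.
Proof.
rewrite favg_fS => sc.
apply: (strongly_convex_first_order (Q := Lm / 2 * sqnorm (y - x))) => // t _.
have := fS_quadratic_bound x (t *: (y - x)) card_setT_gt0.
by rewrite ler_norml dotvZr sqnormZ => /andP[le _]; lra.
Qed.

Lemma strongly_convex_favg_le mu : (0 < d)%N -> strongly_convex mu (favg fs) -> mu <= Lm.
Proof.
move=> d_gt0 sc; pose v : vec := delta_mx 0 (Ordinal d_gt0).
have v_gt0 : 0 < sqnorm v.
  rewrite lt_def sqnorm_eq0 sqnorm_ge0 andbT; apply/eqP => /rowP /(_ (Ordinal d_gt0)).
  by rewrite !mxE eqxx /= => /eqP; rewrite oner_eq0.
have := favg_strongly_convex_first_order 0 v sc.
have := fS_quadratic_bound 0 v card_setT_gt0.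
rewrite favg_fS !subr0 !add0r ler_norml => /andP[_ upper lower].
have : mu / 2 * sqnorm v <= Lm / 2 * sqnorm v by lra.
by rewrite ler_pM2r // ler_pM2r.
Qed.

End Minibatch.

Section Sampling.
Variables (R : realType) (n B : nat).
Notation batch := {set 'I_n}.

Lemma big_batches_rcons (V : nmodType) K (F : K.+1.-tuple batch -> V) :
  \sum_(t | batches_ok B t) F t =
  \sum_(t : K.-tuple batch | batches_ok B t) \sum_(S : batch | #|S| == B)
     F [tuple of rcons t S].
Proof.
rewrite pair_big /= (reindex (fun p : K.-tuple batch * batch => [tuple of rcons p.1 p.2])).
  by apply: eq_bigl => -[t S]; rewrite /batches_ok /= all_rcons andbC.
exists (fun t : K.+1.-tuple batch =>
          ([tuple of belast (thead t) (behead t)], last (thead t) (behead t))).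
  move=> [t S] _ /=; set u := [tuple of rcons t S].
  have /rcons_inj[eq_t ->] : rcons (belast (thead u) (behead u)) (last (thead u) (behead u))
                             = rcons t S.
    by rewrite -lastI; exact: (esym (congr1 val (tuple_eta u))).
  by congr pair; apply: val_inj.
by move=> t _; apply: val_inj; rewrite /= -lastI; exact: (esym (congr1 val (tuple_eta t))).
Qed.

Lemma card_batches K : #|[set t : K.-tuple batch | batches_ok B t]| = ('C(n, B) ^ K)%N.
Proof.
elim: K => [|K IH].
  by rewrite -sum1dep_card (big_pred1 [tuple]) // => t; rewrite tuple0; apply/esym/eqP.
rewrite -sum1dep_card big_batches_rcons expnSr -IH -sum1dep_card big_distrl /=.
by apply: eq_bigr => t _; rewrite mul1n sum1dep_card card_draws card_ord.
Qed.

Lemma card_batch : #|[set S : batch | #|S| == B]| = 'C(n, B).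
Proof. by rewrite card_draws card_ord. Qed.

Definition Ebatch (F : batch -> R) : R :=
  (\sum_(S : batch | #|S| == B) F S) / 'C(n, B)%:R.

Lemma Exp0 (g : 0.-tuple batch -> R) : Exp B g = g [tuple].
Proof.
rewrite /Exp card_batches expn0 divr1 (big_pred1 [tuple]) // => t.
by rewrite tuple0; apply/esym/eqP.
Qed.

Lemma Exp_rcons K (g : K.+1.-tuple batch -> R) :
  Exp B g = Exp B (fun t : K.-tuple batch => Ebatch (fun S => g [tuple of rcons t S])).
Proof.
rewrite /Exp /Ebatch !card_batches big_batches_rcons expnSr natrM invfM mulrA.
by rewrite -mulr_suml mulrAC.
Qed.

Lemma ler_Exp K (g h : K.-tuple batch -> R) :
  (forall t, g t <= h t) -> Exp B g <= Exp B h.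
Proof. by move=> gh; rewrite ler_wpM2r ?invr_ge0 ?ler0n // ler_sum. Qed.

Lemma ler_Ebatch (F G : batch -> R) :
  (forall S : batch, #|S| = B -> F S <= G S) -> Ebatch F <= Ebatch G.
Proof.
move=> FG; rewrite ler_wpM2r ?invr_ge0 ?ler0n //.
by apply: ler_sum => S /eqP; exact: FG.
Qed.

Lemma EbatchD (F G : batch -> R) : Ebatch (fun S => F S + G S) = Ebatch F + Ebatch G.
Proof. by rewrite /Ebatch big_split mulrDl. Qed.

Lemma EbatchN (F : batch -> R) : Ebatch (fun S => - F S) = - Ebatch F.
Proof. by rewrite /Ebatch sumrN mulNr. Qed.

Lemma EbatchZ (k : R) (F : batch -> R) : Ebatch (fun S => k * F S) = k * Ebatch F.
Proof. by rewrite /Ebatch -mulr_sumr mulrA. Qed.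

Hypothesis B_le_n : (B <= n)%N.

Lemma binomial_neq0 : 'C(n, B)%:R != 0 :> R.
Proof. by rewrite pnatr_eq0 -lt0n bin_gt0. Qed.

Lemma Ebatch_cst (k : R) : Ebatch (fun=> k) = k.
Proof.
by rewrite /Ebatch sumr_const -cardsE card_batch -[k *+ _]mulr_natr
  mulfK ?binomial_neq0.
Qed.

Lemma Exp_affine K (g : K.-tuple batch -> R) (a b : R) :
  Exp B (fun t => a * g t + b) = a * Exp B g + b.
Proof.
rewrite /Exp big_split /= -mulr_sumr mulrDl mulrA sumr_const -cardsE card_batches.
by rewrite -[b *+ _]mulr_natr mulfK // natrX expf_neq0 // binomial_neq0.
Qed.

(* Each index lies in the same number of [B]-subsets, by the symmetry
   [S |-> tperm i j @: S]; double counting then fixes that number. *)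
Lemma sum_batches_mem (i : 'I_n) :
  \sum_(S : batch | #|S| == B) ((i \in S)%:R : R) = B%:R * 'C(n, B)%:R / n%:R.
Proof.
have n_neq0 : n%:R != 0 :> R by rewrite pnatr_eq0 -lt0n (leq_ltn_trans _ (ltn_ord i)).
pose c j := \sum_(S : batch | #|S| == B) ((j \in S)%:R : R).
have c_sym j : c j = c i.
  rewrite /c (reindex_inj (imset_inj (@perm_inj _ (tperm i j)))) /=.
  apply: eq_big => S; first by rewrite card_imset //; exact: perm_inj.
  by move=> _; rewrite -{1}(tpermL i j) mem_imset //; exact: perm_inj.
have : \sum_j c j = B%:R * 'C(n, B)%:R.
  rewrite exchange_big /= mulr_natr -card_batch cardsE -sumr_const.
  apply: eq_big => [S|S /eqP <-]; first by rewrite unfold_in.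
  rewrite -sum1_card natr_sum [RHS]big_mkcond /=.
  by apply: eq_bigr => j _; case: (j \in S).
rewrite (eq_bigr _ (fun j _ => c_sym j)) sumr_const card_ord => <-.
by rewrite -[c i *+ n]mulr_natr mulfK.
Qed.

Lemma Ebatch_mean (a : 'I_n -> R) : (0 < B)%N ->
  Ebatch (fun S => mean S a) = mean [set: 'I_n] a.
Proof.
move=> B_gt0; rewrite mean_setT card_ord /Ebatch.
transitivity
  ((\sum_(S : batch | #|S| == B) B%:R^-1 * \sum_i (i \in S)%:R * a i) / 'C(n, B)%:R).
  congr (_ / _); apply: eq_bigr => S /eqP SB; rewrite /mean SB; congr (_ * _).
  by rewrite big_mkcond; apply: eq_bigr => i _; case: (i \in S); rewrite ?mul1r ?mul0r.
rewrite -mulr_sumr exchange_big /=.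
under eq_bigr => i _ do rewrite -mulr_suml sum_batches_mem.
have n_gt0 : (0 < n)%N := leq_trans B_gt0 B_le_n.
by rewrite -mulr_sumr; field; rewrite binomial_neq0 !pnatr_eq0 -!lt0n n_gt0 B_gt0.
Qed.

End Sampling.

Lemma sum_take_rcons (T : Type) (V : nmodType) (F : seq T -> V) (s : seq T) x K :
  size s = K ->
  \sum_(k < K.+1) F (take k (rcons s x)) = \sum_(k < K) F (take k s) + F s.
Proof.
move=> <-; rewrite big_ord_recr /= -cats1 take_size_cat //; congr (_ + _).
by apply: eq_bigr => k _; rewrite takel_cat // ltnW.
Qed.

Section SPSAnalysis.
Variables (R : realType) (d n B : nat) (fs : 'I_n -> 'rV[R]_d -> R) (Lm c gb : R).
Variables (xs x0 : 'rV[R]_d).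
Notation vec := 'rV[R]_d.
Implicit Types (S : {set 'I_n}) (x : vec).

Hypothesis Lm_gt0 : 0 < Lm.
Hypothesis fs_smooth : forall i, smooth Lm (fs i).
Hypothesis fs_convex : forall i, convex_fun (fs i).
Hypothesis fs_ge0 : forall i x, 0 <= fs i x.
Hypothesis c_ge : 1 / 2 <= c.
Hypothesis gb_gt0 : 0 < gb.

Let two_c_ge1 : 1 <= 2 * c.
Proof. by move: c_ge; rewrite ler_pdivrMr // mulrC. Qed.

Let c_gt0 : 0 < c.
Proof. by apply: lt_le_trans c_ge; rewrite divr_gt0. Qed.

Let cinv_le2 : c^-1 <= 2.
Proof. by rewrite invf_ple ?posrE // -div1r. Qed.

Definition alpha : R := Num.min (2 * c * Lm)^-1 gb.

Lemma alpha_gt0 : 0 < alpha.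
Proof. by rewrite lt_min gb_gt0 andbT invr_gt0 !mulr_gt0. Qed.

Lemma alpha_le_gb : alpha <= gb.
Proof. by rewrite ge_min lexx orbT. Qed.

Lemma alpha_le_inv : alpha <= (2 * c * Lm)^-1.
Proof. by rewrite ge_min lexx. Qed.

Lemma mu_alpha_le1 mu : mu <= Lm -> mu * alpha <= 1.
Proof.
move=> mu_le; apply: le_trans (_ : Lm * alpha <= 1).
  by rewrite ler_wpM2r // ltW // alpha_gt0.
rewrite -ler_pdivlMl // mulrC; apply: le_trans alpha_le_inv _.
rewrite div1r lef_pV2 ?posrE ?mulr_gt0 // -[leLHS]mul1r.
by apply: ler_wpM2r; [exact: ltW | exact: two_c_ge1].
Qed.

Lemma sps_step_bounds S x : (0 < #|S|)%N -> gradS fs S x != 0 ->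
  let gamma := sps_step fs c gb S x in
  [/\ alpha <= gamma, gamma <= gb & gamma * (c * sqnorm (gradS fs S x)) <= fS fs S x].
Proof.
move=> S_gt0 g_neq0 gamma; set G := sqnorm _; set F := fS fs S x.
have G_gt0 : 0 < G by rewrite lt_def sqnorm_eq0 g_neq0 sqnorm_ge0.
have GF : G <= 2 * Lm * F by apply: sqnorm_gradS_le => //; exact: ltW.
have cG_gt0 : 0 < c * G by rewrite mulr_gt0.
have gamma_le : gamma <= F / (c * G) by rewrite /gamma /sps_step ge_min lexx.
split; last by rewrite -ler_pdivlMr.
- rewrite /gamma /sps_step le_min alpha_le_gb andbT; apply: le_trans alpha_le_inv _.
  rewrite ler_pdivlMr // mulrC ler_pdivrMr ?mulr_gt0 //.
  by rewrite -/G -/F; nra.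
- by rewrite /gamma /sps_step ge_min lexx orbT.
Qed.

Lemma sqnorm_sgd_step_le S x : (0 < #|S|)%N ->
  sqnorm (sgd_step fs c gb x S - xs) <= sqnorm (x - xs)
    - 2 * alpha * (fS fs S xs - fS fs S x - dotv (gradS fs S x) (xs - x))
    - alpha * (2 - c^-1) * fS fs S x + 2 * gb * fS fs S xs.
Proof.
move=> S_gt0; have := fS_first_order (ltW Lm_gt0) fs_smooth fs_convex S x xs.
have := fS_ge0 fs_ge0 S x; have := fS_ge0 fs_ge0 S xs.
set F := fS fs S x; set Fs := fS fs S xs; set g := gradS fs S x.
move=> Fs_ge0 F_ge0 first_order.
set D := Fs - F - dotv g (xs - x).
have D_ge0 : 0 <= D by rewrite /D; lra.
have a_gt0 := alpha_gt0; have a_le_gb := alpha_le_gb.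
have aF_ge0 : 0 <= alpha * c^-1 * F.
  by apply: mulr_ge0 => //; apply: mulr_ge0; rewrite ?invr_ge0 ltW.
rewrite /sgd_step -/g; have [g0 | g_neq0] := eqVneq g 0.
  have : 0 <= (gb - alpha) * Fs by apply: mulr_ge0; rewrite ?subr_ge0.
  by rewrite /D g0 dotv0l subr0; lra.
have [a_le_gamma gamma_le step] := sps_step_bounds S_gt0 g_neq0.
set gamma := sps_step _ _ _ _ _ in a_le_gamma gamma_le step *.
have -> : x - gamma *: g - xs = (x - xs) - gamma *: g by rewrite addrAC.
have dot_u : dotv (x - xs) g = - dotv g (xs - x) by rewrite -opprB dotvNl dotvC.
rewrite [leLHS]sqnormB sqnormZ dotvZr dot_u -/(sqnorm g).
have gamma_ge0 : 0 <= gamma by apply: le_trans a_le_gamma; exact: ltW.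
have gamma_sq : gamma ^+ 2 * sqnorm g <= gamma * c^-1 * F.
  have -> : gamma ^+ 2 * sqnorm g = gamma * c^-1 * (gamma * (c * sqnorm g)).
    by field; exact: lt0r_neq0.
  by rewrite ler_wpM2l // mulr_ge0 // invr_ge0 ltW.
have : 0 <= (gamma - alpha) * D by apply: mulr_ge0 D_ge0; rewrite subr_ge0.
have : 0 <= (gamma - alpha) * ((2 - c^-1) * F).
  by apply: mulr_ge0; rewrite ?subr_ge0 //; apply: mulr_ge0; rewrite ?subr_ge0.
have : 0 <= (gb - gamma) * Fs by apply: mulr_ge0; rewrite ?subr_ge0.
by rewrite /D in D_ge0 *; lra.
Qed.

Hypothesis B_gt0 : (0 < B)%N.
Hypothesis B_le_n : (B <= n)%N.

Lemma Ebatch_fS y : Ebatch B (fun S => fS fs S y) = favg fs y.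
Proof. by rewrite favg_fS; exact: Ebatch_mean. Qed.

Lemma Ebatch_dotv_gradS x v :
  Ebatch B (fun S => dotv (gradS fs S x) v) = dotv (gradS fs [set: 'I_n] x) v.
Proof. by under eq_fun => S do rewrite dotv_gradS; rewrite Ebatch_mean // -dotv_gradS. Qed.

Lemma Ebatch_sqnorm_sgd_step_le x :
  Ebatch B (fun S => sqnorm (sgd_step fs c gb x S - xs)) <= sqnorm (x - xs)
    - 2 * alpha * (favg fs xs - favg fs x - dotv (gradS fs [set: 'I_n] x) (xs - x))
    - alpha * (2 - c^-1) * favg fs x + 2 * gb * favg fs xs.
Proof.
apply: le_trans (ler_Ebatch _) _; first by move=> S SB; apply: sqnorm_sgd_step_le; rewrite SB.
rewrite !(EbatchD, EbatchN, EbatchZ, Ebatch_cst, Ebatch_fS, Ebatch_dotv_gradS) //.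
Qed.

Let n_gt0 : (0 < n)%N := leq_trans B_gt0 B_le_n.

Lemma sgd_iter_rcons t S :
  sgd_iter fs c gb x0 (rcons t S) = sgd_step fs c gb (sgd_iter fs c gb x0 t) S.
Proof. exact: foldl_rcons. Qed.

Lemma Exp_sqnorm_sgd_iter_le mu k : 0 < mu -> strongly_convex mu (favg fs) ->
  0 <= 1 - mu * alpha ->
  Exp B (fun t : k.-tuple {set 'I_n} => sqnorm (sgd_iter fs c gb x0 t - xs))
  <= (1 - mu * alpha) ^+ k * sqnorm (x0 - xs) + 2 * gb * favg fs xs / (mu * alpha).
Proof.
move=> mu_gt0 sc r_ge0; set r := 1 - mu * alpha; set C := 2 * gb * favg fs xs.
have step x : Ebatch B (fun S => sqnorm (sgd_step fs c gb x S - xs))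
              <= r * sqnorm (x - xs) + C.
  apply: le_trans (Ebatch_sqnorm_sgd_step_le x) _.
  have := favg_strongly_convex_first_order (ltW Lm_gt0) fs_smooth n_gt0 x xs sc.
  rewrite sqnormBC => sc_x.
  have a_gt0 := alpha_gt0.
  have : 2 * alpha * (mu / 2 * sqnorm (x - xs))
         <= 2 * alpha * (favg fs xs - favg fs x - dotv (gradS fs [set: 'I_n] x) (xs - x)).
    by rewrite ler_pM2l ?mulr_gt0 //; lra.
  have : 0 <= alpha * (2 - c^-1) * favg fs x.
    by rewrite mulr_ge0 ?favg_ge0 // mulr_ge0 ?subr_ge0 // ltW.
  by rewrite /r /C; lra.
have ma_gt0 : 0 < mu * alpha by rewrite mulr_gt0 ?alpha_gt0.
have C_ge0 : 0 <= C / (mu * alpha).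
  by rewrite divr_ge0 ?(ltW ma_gt0) // /C mulr_ge0 ?favg_ge0 // mulr_ge0 // ltW.
elim: k => [|k IH]; first by rewrite Exp0 expr0 mul1r lerDl.
rewrite Exp_rcons.
apply: (@le_trans _ _
  (Exp B (fun t : k.-tuple _ => r * sqnorm (sgd_iter fs c gb x0 t - xs) + C))).
  apply: ler_Exp => t /=; under eq_fun => S do rewrite sgd_iter_rcons.
  exact: step.
have -> : r ^+ k.+1 * sqnorm (x0 - xs) + C / (mu * alpha)
          = r * (r ^+ k * sqnorm (x0 - xs) + C / (mu * alpha)) + C.
  by rewrite /r exprS; field; rewrite !lt0r_neq0 ?alpha_gt0.
by rewrite Exp_affine // lerD2r ler_wpM2l.
Qed.

Lemma Exp_lyapunov_le K : c = 1 ->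
  Exp B (fun t : K.-tuple {set 'I_n} =>
    alpha * \sum_(k < K) (favg fs (sgd_iter fs c gb x0 (take k t)) - favg fs xs)
    + sqnorm (sgd_iter fs c gb x0 t - xs))
  <= sqnorm (x0 - xs) + K%:R * (2 * gb * favg fs xs).
Proof.
move=> c1; set C := 2 * gb * favg fs xs.
have step x : Ebatch B (fun S => sqnorm (sgd_step fs c gb x S - xs))
              <= sqnorm (x - xs) - alpha * (favg fs x - favg fs xs) + C.
  apply: le_trans (Ebatch_sqnorm_sgd_step_le x) _; rewrite c1 invr1.
  have := fS_first_order (ltW Lm_gt0) fs_smooth fs_convex [set: 'I_n] x xs.
  rewrite -favg_fS => first_order.
  have a_gt0 := alpha_gt0.
  have : 0 <= alpha * (favg fs xs - favg fs x - dotv (gradS fs [set: 'I_n] x) (xs - x)).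
    by apply: mulr_ge0; [exact: ltW | lra].
  have : 0 <= alpha * favg fs xs by apply: mulr_ge0; [exact: ltW | exact: favg_ge0].
  by rewrite /C; lra.
elim: K => [|K IH]; first by rewrite Exp0 big_ord0 mulr0 add0r mul0r addr0.
rewrite Exp_rcons; set Phi := fun t : K.-tuple _ => alpha * _ + _ in IH.
apply: (@le_trans _ _ (Exp B (fun t => 1 * Phi t + C))).
  apply: ler_Exp => t /=.
  pose gap s := favg fs (sgd_iter fs c gb x0 s) - favg fs xs.
  under eq_fun => S do
    rewrite (sum_take_rcons gap _ (size_tuple t)) sgd_iter_rcons mulrDr.
  rewrite EbatchD Ebatch_cst //; have := step (sgd_iter fs c gb x0 t).
  by rewrite /Phi /gap; lra.
by rewrite Exp_affine // mul1r -[K.+1]addn1 natrD mulrDl mul1r addrA lerD2r.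
Qed.

Lemma favg_xbar_le K (t : K.-tuple {set 'I_n}) : (0 < K)%N ->
  favg fs (xbar fs c gb x0 t)
  <= K%:R^-1 * \sum_(k < K) favg fs (sgd_iter fs c gb x0 (take k t)).
Proof.
move=> K_gt0; rewrite favg_fS.
apply: jensen_first_order (fun k : 'I_K => sgd_iter fs c gb x0 (take k t)) K_gt0 _.
exact: fS_first_order (ltW Lm_gt0) fs_smooth fs_convex _ _.
Qed.

Lemma Exp_favg_xbar_le K : c = 1 -> (0 < K)%N ->
  Exp B (fun t : K.-tuple {set 'I_n} => favg fs (xbar fs c gb x0 t) - favg fs xs)
  <= sqnorm (x0 - xs) / (alpha * K%:R) + 2 * gb * favg fs xs / alpha.
Proof.
move=> c1 K_gt0; have a_gt0 := alpha_gt0.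
have aK_gt0 : 0 < alpha * K%:R by rewrite mulr_gt0 ?ltr0n.
pose Phi (t : K.-tuple {set 'I_n}) :=
  alpha * \sum_(k < K) (favg fs (sgd_iter fs c gb x0 (take k t)) - favg fs xs)
  + sqnorm (sgd_iter fs c gb x0 t - xs).
apply: (@le_trans _ _ (Exp B (fun t => (alpha * K%:R)^-1 * Phi t + 0))).
  apply: ler_Exp => t; have := favg_xbar_le t K_gt0.
  rewrite addr0 /Phi sumrB sumr_const card_ord -[favg fs xs *+ K]mulr_natl.
  set Sf := \sum_(k < K) _; set Q := sqnorm _ => jensen.
  have -> : (alpha * K%:R)^-1 * (alpha * (Sf - K%:R * favg fs xs) + Q)
            = K%:R^-1 * Sf - favg fs xs + (alpha * K%:R)^-1 * Q.
    by field; rewrite !lt0r_neq0 ?ltr0n.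
  have : 0 <= (alpha * K%:R)^-1 * Q.
    by apply: mulr_ge0; [rewrite invr_ge0 ltW | exact: sqnorm_ge0].
  lra.
rewrite Exp_affine // addr0.
apply: le_trans (ler_wpM2l _ (Exp_lyapunov_le K c1)) _; first by rewrite invr_ge0 ltW.
by rewrite le_eqVlt; apply/predU1P; left; field; rewrite !lt0r_neq0 ?ltr0n.
Qed.

End SPSAnalysis.

Theorem corollary1 (R : realType) (d n B : nat)
  (fs : 'I_n -> 'rV[R]_d -> R) (L : 'I_n -> R) (xstar x0 : 'rV[R]_d) (c gb : R) :
  (0 < n)%N -> (0 < B)%N -> (B <= n)%N ->
  (forall i, 0 < L i) ->
  (forall i, convex_fun (fs i)) ->
  (forall i, smooth (L i) (fs i)) ->
  (forall i x, 0 <= fs i x) ->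
  (forall y, favg fs xstar <= favg fs y) ->
  0 < c -> 0 < gb ->
  let alpha := Num.min (2 * c * Lmax L)^-1 gb in
  (* (i) *)
  (c = 1 ->
   forall K : nat, (1 <= K)%N ->
     Exp B (fun t : K.-tuple {set 'I_n} =>
              favg fs (xbar fs c gb x0 t) - favg fs xstar)
     <= sqnorm (x0 - xstar) / (alpha * K%:R) + 2 * gb * favg fs xstar / alpha)
  /\
  (* (ii) *)
  (forall mu : R, 0 < mu -> strongly_convex mu (favg fs) -> 1 / 2 <= c ->
   forall k : nat,
     Exp B (fun t : k.-tuple {set 'I_n} =>
              sqnorm (sgd_iter fs c gb x0 t - xstar))
     <= (1 - mu * alpha) ^+ k * sqnorm (x0 - xstar)
        + 2 * gb * favg fs xstar / (mu * alpha)).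
Proof.
move=> n_gt0 B_gt0 B_le_n L_gt0 fs_convex fs_smooth fs_ge0 _ _ gb_gt0 alpha.
have L_le i : L i <= Lmax L by exact: le_bigmax.
have Lm_gt0 : 0 < Lmax L := lt_le_trans (L_gt0 (Ordinal n_gt0)) (L_le _).
have sm i : smooth (Lmax L) (fs i) := smooth_le (L_le i) (fs_smooth i).
split=> [c1 K K_gt0 | mu mu_gt0 sc c_ge k].
  have c_ge : 1 / 2 <= c by rewrite c1 ler_pdivrMr // mul1r ler1n.
  exact: Exp_favg_xbar_le.
have a_gt0 : 0 < alpha := alpha_gt0 Lm_gt0 c_ge gb_gt0.
(* In dimension 0 every mu is a modulus of strong convexity, but all norms vanish. *)
have [d0 | d_gt0] := posnP d.
  have sqnorm0 (w : 'rV[R]_d) : sqnorm w = 0.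
    by rewrite /sqnorm /dotv; move: w; rewrite d0 => w; rewrite big_ord0.
  rewrite /Exp; under eq_bigr => t _ do rewrite sqnorm0.
  have C_ge0 : 0 <= 2 * gb * favg fs xstar.
    by apply: mulr_ge0 (favg_ge0 fs_ge0 _); rewrite mulr_ge0 ?ltW.
  by rewrite big1 // mul0r sqnorm0 mulr0 add0r divr_ge0 // ltW // mulr_gt0.
apply: Exp_sqnorm_sgd_iter_le => //; rewrite subr_ge0; apply: mu_alpha_le1 => //.
exact: strongly_convex_favg_le (ltW Lm_gt0) sm n_gt0 _ d_gt0 sc.
Qed.
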